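(* Let $G$ be a group and let $S=\bigoplus_{g\in G}S_g$ be virtually epsilon-strongly $G$-graded where, for each $g\in G$, $M_g$ is a set of pairwise orthogonal, commuting idempotents such that $E_g=\bigvee M_g$ is a set of local units for $S_gS_{g^{-1}}$. Then for every $g\in G$ and $s\in S_g$ there exist $m_1,\dots,m_i\in M_g$ and $m_1',\dots,m_j'\in M_{g^{-1}}$ such that $(m_1\vee\cdots\vee m_i)s=s$ and $s(m_1'\vee\cdots\vee m_j')=s$.
   Context: Rings are associative, not necessarily unital; $AB$ denotes finite sums of products. A $G$-grading: $S=\bigoplus_gS_g$, $S_gS_h\subseteq S_{gh}$. Idempotents are ordered by $a\le b$ iff $a=ab=ba$; $\vee$ is the least upper bound; $\bigvee M$ is the set of finite joins of elements of $M$. A set of local units for a ring $R$ is a $\vee$-closed set of pairwise commuting idempotents of $R$ such that every $r\in R$ has some $f$ in it with $fr=rf=r$. The grading is virtually epsilon-strong if $S_gS_{g^{-1}}S_g=S_g$ for all $g$ and each $S_gS_{g^{-1}}$ has enough idempotents (a set of pairwise orthogonal commuting idempotents whose $\vee$-closure is a set of local units). *)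

From mathcomp Require Import all_boot all_order all_algebra.
From Stdlib Require List.
Set Implicit Arguments. Unset Strict Implicit. Unset Printing Implicit Defensive.
Import GRing.Theory.
Local Open Scope ring_scope.

Record is_group (G : Type) (gmul : G -> G -> G) (gone : G) (ginv : G -> G) :
  Prop := IsGroup {
  gmulA : forall x y z, gmul x (gmul y z) = gmul (gmul x y) z;
  gmul1 : forall x, gmul gone x = x /\ gmul x gone = x;
  gmulV : forall x, gmul (ginv x) x = gone /\ gmul x (ginv x) = gone
}.

Record is_rng (V : zmodType) (mul : V -> V -> V) : Prop := IsRng {
  mulA : forall x y z, mul x (mul y z) = mul (mul x y) z;
  mulDl : forall x y z, mul (x + y) z = mul x z + mul y z;
  mulDr : forall x y z, mul x (y + z) = mul x y + mul x z
}.

Section Defs.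
Variables (V : zmodType) (mul : V -> V -> V).

Definition is_addsubgroup (A : V -> Prop) : Prop :=
  A 0 /\ (forall x y, A x -> A y -> A (x - y)).

Definition prodset (A B : V -> Prop) : V -> Prop :=
  fun x => exists l : seq (V * V)%type,
    (forall p, List.In p l -> A p.1 /\ B p.2) /\
    x = \sum_(p <- l) mul p.1 p.2.

Definition prodset3 (A B C : V -> Prop) : V -> Prop :=
  prodset (prodset A B) C.

Definition set_eq (A B : V -> Prop) : Prop := forall x, A x <-> B x.

Definition idempotent (e : V) : Prop := mul e e = e.

Definition idem_le (a b : V) : Prop := a = mul a b /\ a = mul b a.

Definition is_lub (R : V -> Prop) (l : seq V) (z : V) : Prop :=
  R z /\ idempotent z /\
  (forall x, List.In x l -> idem_le x z) /\
  (forall u, R u -> idempotent u -> (forall x, List.In x l -> idem_le x u) ->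
     idem_le z u).

Definition joins (R M : V -> Prop) : V -> Prop :=
  fun z => exists l : seq V, (forall x, List.In x l -> M x) /\ is_lub R l z.

Definition local_units (R E : V -> Prop) : Prop :=
  (forall e, E e -> R e /\ idempotent e) /\
  (forall e f, E e -> E f -> mul e f = mul f e) /\
  (forall e f, E e -> E f -> exists z, is_lub R [:: e; f] z /\ E z) /\
  (forall r, R r -> exists f, E f /\ mul f r = r /\ mul r f = r).

Definition orth_idems (R M : V -> Prop) : Prop :=
  (forall e, M e -> R e /\ idempotent e) /\
  (forall e f, M e -> M f -> mul e f = mul f e) /\
  (forall e f, M e -> M f -> e <> f -> mul e f = 0).

Definition enough_idempotents (R : V -> Prop) : Prop :=
  exists M : V -> Prop, orth_idems R M /\ local_units R (joins R M).

Variables (G : Type) (gmul : G -> G -> G) (ginv : G -> G).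

Definition is_grading (S : G -> V -> Prop) : Prop :=
  (forall g, is_addsubgroup (S g)) /\
  (forall g h x y, S g x -> S h y -> S (gmul g h) (mul x y)) /\
  (forall s : V, exists l : seq (G * V)%type,
      List.NoDup (map fst l) /\ (forall p, List.In p l -> S p.1 p.2) /\
      s = \sum_(p <- l) p.2) /\
  (forall l : seq (G * V)%type,
      List.NoDup (map fst l) -> (forall p, List.In p l -> S p.1 p.2) ->
      \sum_(p <- l) p.2 = 0 -> forall p, List.In p l -> p.2 = 0).

Definition virtually_epsilon_strong (S : G -> V -> Prop) : Prop :=
  is_grading S /\
  (forall g, set_eq (prodset3 (S g) (S (ginv g)) (S g)) (S g)) /\
  (forall g, enough_idempotents (prodset (S g) (S (ginv g)))).

End Defs.

(* An element absorbed on the left by some local unit stays so under sums (the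
   join of two local units absorbs whatever either of them absorbs) and under
   right multiplication.  Since S_g = S_g S_{g^-1} S_g, every s in S_g is a sum
   of products r c with r in S_g S_{g^-1}, hence is absorbed on the left by a
   join of elements of M_g.  Regrouping s as a sum of products a (b c) with
   b c in S_{g^-1} S_g gives the right-hand statement symmetrically. *)
From Pilot Require Import Defs.
From mathcomp Require Import all_boot all_order all_algebra.
From Stdlib Require List.
Set Implicit Arguments. Unset Strict Implicit. Unset Printing Implicit Defensive.
Local Open Scope ring_scope.
Import GRing.Theory.

Lemma ginvK (G : Type) (gmul : G -> G -> G) (gone : G) (ginv : G -> G) :
  is_group gmul gone ginv -> forall x, ginv (ginv x) = x.
Proof.
move=> grp x; have [Vx_x _] := gmulV grp x; have [VVx_Vx _] := gmulV grp (ginv x).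
have [_ VVx1] := gmul1 grp (ginv (ginv x)); have [x1 _] := gmul1 grp x.
by rewrite -[LHS]VVx1 -Vx_x (gmulA grp) VVx_Vx x1.
Qed.

Section Rng.
Variables (V : zmodType) (mul : V -> V -> V).
Hypothesis rngV : is_rng mul.

Lemma big_In_ind (K : V -> Prop) (T : Type) (l : seq T) (F : T -> V) :
  K 0 -> (forall x y, K x -> K y -> K (x + y)) ->
  (forall p, List.In p l -> K (F p)) -> K (\sum_(p <- l) F p).
Proof.
move=> K0 KD; elim: l => [|p l IHl] Kl; first by rewrite big_nil.
by rewrite big_cons; apply: KD; [apply: Kl; left | apply: IHl => q lq; apply: Kl; right].
Qed.

Lemma rng_mul0r x : mul 0 x = 0.
Proof.
have h := Defs.mulDl rngV 0 0 x; rewrite addr0 in h.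
by apply: (addrI (mul 0 x)); rewrite addr0 -h.
Qed.

Lemma rng_mulr_suml (T : Type) (l : seq T) (F : T -> V) x :
  mul (\sum_(p <- l) F p) x = \sum_(p <- l) mul (F p) x.
Proof. exact: (big_morph _ (fun a b => Defs.mulDl rngV a b x) (rng_mul0r x)). Qed.

Lemma prodset0 (A B : V -> Prop) : prodset mul A B 0.
Proof. by exists [::]; rewrite big_nil. Qed.

Lemma prodset_mul (A B : V -> Prop) a b : A a -> B b -> prodset mul A B (mul a b).
Proof.
move=> Aa Bb; exists [:: (a, b)]; rewrite big_cons big_nil addr0.
by split=> // p [<- | []].
Qed.

Lemma prodsetD (A B : V -> Prop) x y : prodset mul A B x -> prodset mul A B y -> prodset mul A B (x + y).
Proof.
move=> [lx [ABlx ->]] [ly [ABly ->]]; exists (lx ++ ly); rewrite big_cat.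
by split=> // p /(@List.in_app_or _ lx ly p) [/ABlx | /ABly].
Qed.

Lemma prodset_assoc (A B C : V -> Prop) x : prodset3 mul A B C x -> prodset mul A (prodset mul B C) x.
Proof.
case=> l [ABCl ->]; apply: big_In_ind => [||p /ABCl [[lp [ABlp ->]] Cp]].
- exact: prodset0.
- exact: prodsetD.
rewrite rng_mulr_suml; apply: big_In_ind => [||q /ABlp [Aq Bq]].
- exact: prodset0.
- exact: prodsetD.
by rewrite -(Defs.mulA rngV); apply: prodset_mul => //; apply: prodset_mul.
Qed.

Section LocalUnits.
Variables R E : V -> Prop.
Hypothesis unitsE : local_units mul R E.

Definition left_absorbed (x : V) : Prop := exists2 e, E e & mul e x = x.
Definition right_absorbed (x : V) : Prop := exists2 e, E e & mul x e = x.

Lemma left_absorbed_of_mem x : R x -> left_absorbed x.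
Proof. by case: unitsE => _ [_ [_ units]] /units [e [Ee [ex _]]]; exists e. Qed.

Lemma right_absorbed_of_mem x : R x -> right_absorbed x.
Proof. by case: unitsE => _ [_ [_ units]] /units [e [Ee [_ xe]]]; exists e. Qed.

Lemma left_absorbedD x y : left_absorbed x -> left_absorbed y -> left_absorbed (x + y).
Proof.
case=> e Ee ex [f Ef fy]; case: unitsE => _ [_ [join _]].
have [z [[_ [_ [le_ef _]]] Ez]] := join e f Ee Ef.
have [_ ze] := le_ef e (or_introl erefl).
have [_ zf] := le_ef f (or_intror (or_introl erefl)).
exists z => //.
by rewrite (Defs.mulDr rngV) -{1}ex -{1}fy !(Defs.mulA rngV) -ze -zf ex fy.
Qed.

Lemma right_absorbedD x y : right_absorbed x -> right_absorbed y -> right_absorbed (x + y).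
Proof.
case=> e Ee xe [f Ef yf]; case: unitsE => _ [_ [join _]].
have [z [[_ [_ [le_ef _]]] Ez]] := join e f Ee Ef.
have [ez _] := le_ef e (or_introl erefl).
have [fz _] := le_ef f (or_intror (or_introl erefl)).
exists z => //.
by rewrite (Defs.mulDl rngV) -{1}xe -{1}yf -!(Defs.mulA rngV) -ez -fz xe yf.
Qed.

Lemma left_absorbed_mulr x c : left_absorbed x -> left_absorbed (mul x c).
Proof. by case=> e Ee ex; exists e => //; rewrite (Defs.mulA rngV) ex. Qed.

Lemma right_absorbed_mull x c : right_absorbed x -> right_absorbed (mul c x).
Proof. by case=> e Ee xe; exists e => //; rewrite -(Defs.mulA rngV) xe. Qed.

Lemma prodset_left_absorbed C x : R 0 -> prodset mul R C x -> left_absorbed x.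
Proof.
move=> R0 [l [RCl ->]]; apply: big_In_ind => [||p /RCl [Rp _]].
- exact: left_absorbed_of_mem.
- exact: left_absorbedD.
- exact/left_absorbed_mulr/left_absorbed_of_mem.
Qed.

Lemma prodset_right_absorbed A x : R 0 -> prodset mul A R x -> right_absorbed x.
Proof.
move=> R0 [l [ARl ->]]; apply: big_In_ind => [||p /ARl [_ Rp]].
- exact: right_absorbed_of_mem.
- exact: right_absorbedD.
- exact/right_absorbed_mull/right_absorbed_of_mem.
Qed.

End LocalUnits.
End Rng.

Theorem lemma5p12 (G : Type) (gmul : G -> G -> G) (gone : G) (ginv : G -> G)
  (V : zmodType) (mul : V -> V -> V) (S : G -> V -> Prop)
  (M : G -> V -> Prop) :
  is_group gmul gone ginv ->
  is_rng mul ->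
  virtually_epsilon_strong mul gmul ginv S ->
  (forall g, orth_idems mul (prodset mul (S g) (S (ginv g))) (M g)) ->
  (forall g, local_units mul (prodset mul (S g) (S (ginv g)))
                (joins mul (prodset mul (S g) (S (ginv g))) (M g))) ->
  forall g s, S g s ->
    (exists (l : seq V) (z : V),
       (forall m, List.In m l -> M g m) /\
       is_lub mul (prodset mul (S g) (S (ginv g))) l z /\ mul z s = s) /\
    (exists (l' : seq V) (z' : V),
       (forall m, List.In m l' -> M (ginv g) m) /\
       is_lub mul (prodset mul (S (ginv g)) (S (ginv (ginv g)))) l' z' /\
       mul s z' = s).
Proof.
move=> grp rng [_ [regular _]] _ units g s Sg_s.
have s3 := proj2 (regular g s) Sg_s.
split.
- have [z [l [Ml lub]] zs] := prodset_left_absorbed rng (units g) (prodset0 _ _ _) s3.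
  by exists l, z.
- have : prodset mul (S g) (prodset mul (S (ginv g)) (S (ginv (ginv g)))) s.
    by rewrite (ginvK grp); exact: prodset_assoc.
  case/(prodset_right_absorbed rng (units (ginv g)) (prodset0 _ _ _)) => z [l [Ml lub]] sz.
  by exists l, z.
Qed.
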